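(* Let $t\in\mathbb N$ and $N=\lvert t\rvert_{\mathtt{01}}$. Then for all real $\vartheta$ with $\lvert\vartheta\rvert\le\pi$, \[ \lvert\gamma_t(\vartheta)\rvert\le\Bigl(1-\frac{1}{128}\vartheta^2\Bigr)^{\lfloor N/2\rfloor}. \]
   Context: For $n\in\mathbb N=\{0,1,\dots\}$, $\lvert n\rvert_{\mathtt{01}}$ denotes the number of maximal blocks of $\mathtt 1$s in the binary expansion of $n$ (equivalently, the number of occurrences of $\mathtt{01}$ after padding with a leading $\mathtt 0$). Let $\mathsf r(n)$ be the number of (overlapping) occurrences of $\mathtt{11}$ in the binary expansion of $n$, $d(t,n)=\mathsf r(n+t)-\mathsf r(n)$, and $c_t(k)$ the asymptotic density (which exists) of $\{n\in\mathbb N:d(t,n)=k\}$, $k\in\mathbb Z$. Let $\gamma_t(\vartheta)=\sum_{k\in\mathbb Z}c_t(k)\exp(ik\vartheta)$. *)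

From Stdlib Require Import Reals ZArith List Arith Bool.
From Coquelicot Require Import Coquelicot.
Import ListNotations.
Open Scope R_scope.
Open Scope bool_scope.

(* Indices 0 .. log2 n + 1 suffice: higher bits are all 0. *)
Definition bit_range (n : nat) : list nat := seq 0 (S (S (Nat.log2 n))).

(* |n|_01 : number of occurrences of "01" in the binary expansion of n padded
   with a leading 0 (reading most significant bit first): positions i with
   bit (i+1) = 0 and bit i = 1; equivalently number of maximal blocks of 1s. *)
Definition blocks01 (n : nat) : nat :=
  length (filter (fun i => negb (Nat.testbit n (S i)) && Nat.testbit n i)
                 (bit_range n)).

Definition r11 (n : nat) : nat :=
  length (filter (fun i => Nat.testbit n (S i) && Nat.testbit n i)
                 (bit_range n)).

Definition dd (t n : nat) : Z := (Z.of_nat (r11 (n + t)) - Z.of_nat (r11 n))%Z.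

Definition count_d (t : nat) (k : Z) (M : nat) : nat :=
  length (filter (fun n => Z.eqb (dd t n) k) (seq 0 M)).

(* c_t(k): asymptotic density of {n : d(t,n) = k}, i.e. the limit of
   #{n < M : d(t,n) = k} / M as M -> oo (this limit exists). *)
Definition c_t (t : nat) (k : Z) : R :=
  real (Lim_seq (fun M => INR (count_d t k M) / INR M)).

Definition CSeries (f : nat -> C) : C :=
  (Series (fun m => fst (f m)), Series (fun m => snd (f m))).
Definition sumZ (f : Z -> C) : C :=
  Cplus (CSeries (fun m => f (Z.of_nat m)))
        (CSeries (fun m => f (- Z.of_nat m - 1)%Z)).

Definition cexpi (x : R) : C := (cos x, sin x).

Definition gamma_t (t : nat) (theta : R) : C :=
  sumZ (fun k => Cmult (RtoC (c_t t k)) (cexpi (IZR k * theta))).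

From Stdlib Require Import Reals ZArith List Arith Lia Bool Lra Psatz.
From Coquelicot Require Import Coquelicot.
Import ListNotations.
Open Scope R_scope.

(* Splitting off the last binary digit of n turns the average of exp(i theta d(t,n)) over
   n < 2^j into averages of the same kind for t/2 or t/2 + 1, twisted by the two digits just
   split off (which may still form a 11 with the next ones).  This is a transfer recursion over
   eight states: a carry and the two pending digits.  If four consecutive digits of t are not
   all equal, unrolling it four times yields 16 terms among which two have the same state and
   exponents differing by one; since |1 + exp(i theta)| <= 2 - theta^2/8, this saves a factor
   1 - theta^2/128.  The digits of t change 2N or 2N - 1 times, and a greedy scan for disjoint
   non-constant windows meets at most four changes per window found (plus two at the end), so
   it finds at least floor(N/2) of them.  Finally, for all but 2t residues x mod 2^(j+1),
   adding t to n = x (mod 2^(j+1)) causes no carry beyond digit j, so d(t,n) only depends on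
   x; hence c_t and gamma_t differ from their averages over n < 2^(j+1) by O(t / 2^j). *)

(** * Counting patterns of adjacent binary digits *)

Definition adjacent_count (f : bool -> bool -> bool) (n : nat) : nat :=
  length (filter (fun i => f (Nat.testbit n (S i)) (Nat.testbit n i)) (bit_range n)).

Lemma length_filter_map_S (p : nat -> bool) (l : list nat) :
  length (filter p (map S l)) = length (filter (fun i => p (S i)) l).
Proof. induction l as [|a l IH]; simpl; [reflexivity|]. destruct (p (S a)); simpl; auto. Qed.

Lemma odd_double_add y b : Nat.odd (2 * y + Nat.b2n b) = b.
Proof. rewrite <- Nat.bit0_odd. apply Nat.testbit_0_r. Qed.

Lemma double_add_odd_div2 m : m = (2 * (m / 2) + Nat.b2n (Nat.odd m))%nat.
Proof. rewrite <- Nat.div2_div. apply Nat.div2_odd. Qed.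

Lemma adjacent_count_double_add f y b : f false false = false ->
  adjacent_count f (2 * y + Nat.b2n b) = (adjacent_count f y + Nat.b2n (f (Nat.odd y) b))%nat.
Proof.
  intros Hf. destruct (Nat.eq_dec y 0) as [->|Hy].
  { unfold adjacent_count, bit_range.
    destruct b; cbv; rewrite ?Hf; destruct (f false true); reflexivity. }
  unfold adjacent_count, bit_range at 1.
  assert (Hlog : Nat.log2 (2 * y + Nat.b2n b) = S (Nat.log2 y)).
  { destruct b; simpl Nat.b2n.
    - apply Nat.log2_succ_double; lia.
    - rewrite Nat.add_0_r; apply Nat.log2_double; lia. }
  rewrite Hlog. change (seq 0 (S (S (S (Nat.log2 y))))) with (0%nat :: seq 1 (S (S (Nat.log2 y)))).
  rewrite <- seq_shift. cbn [filter].
  rewrite Nat.testbit_succ_r, Nat.testbit_0_r, Nat.bit0_odd.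
  assert (Hhigh : length (filter (fun i => f (Nat.testbit (2 * y + Nat.b2n b) (S i))
                                              (Nat.testbit (2 * y + Nat.b2n b) i))
                         (map S (seq 0 (S (S (Nat.log2 y)))))) = adjacent_count f y).
  { rewrite length_filter_map_S. unfold adjacent_count, bit_range.
    f_equal. apply filter_ext. intro i. rewrite !Nat.testbit_succ_r. reflexivity. }
  destruct (f (Nat.odd y) b); cbn [length Nat.b2n]; rewrite Hhigh; unfold adjacent_count; lia.
Qed.

Lemma r11_double_add y b : r11 (2 * y + Nat.b2n b) = (r11 y + Nat.b2n (Nat.odd y && b))%nat.
Proof. exact (adjacent_count_double_add andb y b eq_refl). Qed.

Lemma blocks01_double_add y b :
  blocks01 (2 * y + Nat.b2n b) = (blocks01 y + Nat.b2n (negb (Nat.odd y) && b))%nat.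
Proof. exact (adjacent_count_double_add (fun a b => negb a && b) y b eq_refl). Qed.

Lemma r11_le n : (r11 n <= n + 2)%nat.
Proof.
  unfold r11. eapply Nat.le_trans; [apply filter_length_le|].
  unfold bit_range. rewrite length_seq. pose proof (Nat.log2_le_lin n ltac:(lia)). lia.
Qed.

Lemma r11_concat j : forall h x, (x < 2 ^ S j)%nat ->
  r11 (h * 2 ^ S j + x) = (r11 h + r11 x + Nat.b2n (Nat.odd h && (2 ^ j <=? x)))%nat.
Proof.
  induction j as [|j IH]; intros h x Hx.
  - assert (Hx01 : x = 0%nat \/ x = 1%nat) by (simpl in Hx; lia).
    replace (h * 2 ^ 1 + x)%nat with (2 * h + Nat.b2n (x =? 1))%nat
      by (destruct Hx01; subst; simpl; lia).
    rewrite r11_double_add.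
    destruct Hx01 as [-> | ->]; change (r11 0) with 0%nat; change (r11 1) with 0%nat;
      destruct (Nat.odd h); simpl; lia.
  - rewrite (double_add_odd_div2 x). set (y := (x / 2)%nat). set (b := Nat.odd x).
    assert (Hy : (y < 2 ^ S j)%nat).
    { unfold y. rewrite Nat.pow_succ_r' in Hx. apply Nat.Div0.div_lt_upper_bound. lia. }
    replace (h * 2 ^ S (S j) + (2 * y + Nat.b2n b))%nat
      with (2 * (h * 2 ^ S j + y) + Nat.b2n b)%nat by (rewrite (Nat.pow_succ_r' 2 (S j)); lia).
    rewrite !r11_double_add, IH by exact Hy.
    assert (Hodd : Nat.odd (h * 2 ^ S j + y) = Nat.odd y).
    { replace (h * 2 ^ S j + y)%nat with (y + 2 * (h * 2 ^ j))%nat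
        by (rewrite Nat.pow_succ_r'; lia).
      apply Nat.odd_add_mul_2. }
    assert (Hcmp : (2 ^ S j <=? 2 * y + Nat.b2n b) = (2 ^ j <=? y)).
    { rewrite Nat.pow_succ_r'. destruct (2 ^ j <=? y) eqn:E.
      - apply Nat.leb_le in E. apply Nat.leb_le. lia.
      - apply Nat.leb_gt in E. apply Nat.leb_gt. destruct b; simpl; lia. }
    rewrite Hodd, Hcmp. lia.
Qed.

(** * Exponential sums and their transfer recursion *)

Lemma INR_pow2 n : INR (2 ^ n) = 2 ^ n.
Proof. rewrite pow_INR. reflexivity. Qed.

Lemma INR_pow2_pos n : 0 < INR (2 ^ n).
Proof. rewrite INR_pow2. apply pow_lt. lra. Qed.

Definition b2Z (b : bool) : Z := Z.of_nat (Nat.b2n b).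

(* The low digits [u] and [v] appended to [n + t] and [n] remember the digits split
   off by the previous halving step, which can still form a 11 across the split. *)
Definition twisted_d (t n : nat) (u v : bool) : Z :=
  (Z.of_nat (r11 (2 * (n + t) + Nat.b2n u)) - Z.of_nat (r11 (2 * n + Nat.b2n v)))%Z.

Lemma twisted_d_false t n : twisted_d t n false false = dd t n.
Proof.
  unfold twisted_d, dd. rewrite !r11_double_add, !andb_false_r, Nat.add_comm. simpl. lia.
Qed.

Lemma twisted_d_double_add t c n b u v :
  twisted_d (2 * t + Nat.b2n c) (2 * n + Nat.b2n b) u v =
  (twisted_d (t + Nat.b2n (c && b)) n (xorb c b) b + b2Z u * b2Z (xorb c b) - b2Z v * b2Z b)%Z.
Proof.
  unfold twisted_d, b2Z.
  replace (2 * n + Nat.b2n b + (2 * t + Nat.b2n c))%nat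
    with (2 * (n + (t + Nat.b2n (c && b))) + Nat.b2n (xorb c b))%nat
    by (destruct c, b; simpl; lia).
  rewrite !r11_double_add, !odd_double_add.
  destruct c, b, u, v; simpl; lia.
Qed.

(* A state [(s, u, v)] stands for [twisted_sum j (m + s) u v]: a pending carry [s] and the
   digits [u] and [v] appended below [n + m + s] and [n]. *)
Definition state : Type := (bool * bool * bool)%type.

Definition transitions (b : bool) (i : state) : list (Z * state) :=
  let '(s, u, v) := i in
  map (fun b' => ((b2Z u * b2Z (xorb (xorb b s) b') - b2Z v * b2Z b')%Z,
                  ((b && s) || (xorb b s && b'), xorb (xorb b s) b', b'))) [false; true].

Fixpoint low_bits (m l : nat) : list bool :=
  match l with O => [] | S l' => Nat.odd m :: low_bits (m / 2) l' end.

Fixpoint transition_paths (w : list bool) (i : state) : list (Z * state) :=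
  match w with
  | [] => [(0%Z, i)]
  | b :: w' =>
      flat_map (fun p => map (fun q => ((fst p + fst q)%Z, snd q)) (transition_paths w' (snd p)))
               (transitions b i)
  end.

Lemma length_transition_paths w i : length (transition_paths w i) = (2 ^ length w)%nat.
Proof.
  revert i; induction w as [|b w IH]; intros [[s u] v]; [reflexivity|].
  cbn [transition_paths transitions map flat_map].
  rewrite !length_app, !length_map, !IH. simpl. lia.
Qed.

Section ExponentialSums.
Variable th : R.
Local Open Scope C_scope.

Definition expi (k : Z) : C := cexpi (IZR k * th).

Lemma expi_add a b : expi (a + b) = expi a * expi b.
Proof.
  unfold expi, cexpi. rewrite plus_IZR, Rmult_plus_distr_r, cos_plus, sin_plus.
  unfold Cmult; simpl. f_equal; ring.
Qed.

Lemma expi_0 : expi 0 = 1.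
Proof. unfold expi, cexpi. rewrite Rmult_0_l, cos_0, sin_0. reflexivity. Qed.

Lemma Cmod_expi k : Cmod (expi k) = 1%R.
Proof.
  unfold expi, cexpi, Cmod. simpl fst; simpl snd. rewrite <- sqrt_1. f_equal.
  pose proof (sin2_cos2 (IZR k * th)) as H. rewrite !Rsqr_pow2 in H. lra.
Qed.

Fixpoint csum (f : nat -> C) (N : nat) : C :=
  match N with O => 0 | S N' => csum f N' + f N' end.

Lemma csum_ext f g N : (forall n, (n < N)%nat -> f n = g n) -> csum f N = csum g N.
Proof.
  induction N; intros H; simpl; [reflexivity|].
  rewrite IHN by (intros; apply H; lia). rewrite H by lia. reflexivity.
Qed.

Lemma csum_plus f g N : csum (fun n => f n + g n) N = csum f N + csum g N.
Proof. induction N; simpl; [ring|]. rewrite IHN. ring. Qed.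

Lemma csum_scal c f N : csum (fun n => c * f n) N = c * csum f N.
Proof. induction N; simpl; [ring|]. rewrite IHN. ring. Qed.

Lemma csum_double f N : csum f (2 * N) = csum (fun n => f (2 * n)%nat + f (2 * n + 1)%nat) N.
Proof.
  induction N as [|N IH]; [reflexivity|].
  replace (2 * S N)%nat with (S (S (2 * N))) by lia. cbn [csum]. rewrite IH.
  replace (S (2 * N)) with (2 * N + 1)%nat by lia. ring.
Qed.

Lemma Cmod_csum_le f N K :
  (forall n, (n < N)%nat -> Cmod (f n) <= K)%R -> (Cmod (csum f N) <= INR N * K)%R.
Proof.
  induction N; intros H; cbn [csum].
  - rewrite Cmod_0. simpl. lra.
  - eapply Rle_trans; [apply Cmod_triangle|]. rewrite S_INR.
    pose proof (IHN (fun n Hn => H n ltac:(lia))). pose proof (H N ltac:(lia)). lra.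
Qed.

Definition twisted_sum (j t : nat) (u v : bool) : C :=
  csum (fun n => expi (twisted_d t n u v)) (2 ^ j).

Lemma Cmod_twisted_sum_le j t u v : (Cmod (twisted_sum j t u v) <= 2 ^ j)%R.
Proof.
  unfold twisted_sum. eapply Rle_trans; [apply Cmod_csum_le with (K := 1%R)|].
  - intros n _. rewrite Cmod_expi. lra.
  - rewrite INR_pow2, Rmult_1_r. lra.
Qed.

Definition state_sum (j m : nat) (i : state) : C :=
  let '(s, u, v) := i in twisted_sum j (m + Nat.b2n s) u v.

Definition wsum (l : list (Z * state)) (g : state -> C) : C :=
  fold_right (fun p acc => expi (fst p) * g (snd p) + acc) 0 l.

Lemma wsum_app l1 l2 g : wsum (l1 ++ l2) g = wsum l1 g + wsum l2 g.
Proof. induction l1; simpl; [ring|]. rewrite IHl1. ring. Qed.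

Lemma wsum_shift e l g : wsum (map (fun q => ((e + fst q)%Z, snd q)) l) g = expi e * wsum l g.
Proof. induction l; simpl; [ring|]. rewrite IHl, expi_add. ring. Qed.

Lemma wsum_ext l g h : (forall i, g i = h i) -> wsum l g = wsum l h.
Proof. intros H; induction l; simpl; [reflexivity|]. rewrite IHl, H. reflexivity. Qed.

Lemma twisted_sum_succ j t c u v :
  twisted_sum (S j) (2 * t + Nat.b2n c) u v =
  wsum (map (fun b => ((b2Z u * b2Z (xorb c b) - b2Z v * b2Z b)%Z, (c && b, xorb c b, b)))
            [false; true])
       (fun i => state_sum j t i).
Proof.
  cbn [map wsum fold_right fst snd state_sum]. unfold twisted_sum.
  rewrite Cplus_0_r, Nat.pow_succ_r', csum_double, <- !csum_scal, <- csum_plus.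
  apply csum_ext. intros n _.
  replace (2 * n)%nat with (2 * n + Nat.b2n false)%nat at 1 by (simpl; lia).
  replace (2 * n + 1)%nat with (2 * n + Nat.b2n true)%nat by reflexivity.
  rewrite !twisted_d_double_add, <- !Z.add_sub_assoc, !expi_add. ring.
Qed.

Lemma state_sum_succ j m i :
  state_sum (S j) m i = wsum (transitions (Nat.odd m) i) (state_sum j (m / 2)).
Proof.
  destruct i as [[s u] v]. rewrite (double_add_odd_div2 m) at 1.
  set (b := Nat.odd m). set (m' := (m / 2)%nat).
  cbn [state_sum transitions].
  replace (2 * m' + Nat.b2n b + Nat.b2n s)%nat
    with (2 * (m' + Nat.b2n (b && s)) + Nat.b2n (xorb b s))%nat by (destruct b, s; simpl; lia).
  rewrite twisted_sum_succ. cbn [map wsum fold_right fst snd state_sum].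
  destruct b, s; simpl; rewrite ?Nat.add_0_r; reflexivity.
Qed.

Lemma wsum_flat_map F L g :
  wsum (flat_map (fun p => map (fun q => ((fst p + fst q)%Z, snd q)) (F (snd p))) L) g =
  wsum L (fun i => wsum (F i) g).
Proof. induction L; simpl; [reflexivity|]. rewrite wsum_app, wsum_shift, IHL. reflexivity. Qed.

Lemma state_sum_paths l : forall j m i,
  state_sum (l + j) m i = wsum (transition_paths (low_bits m l) i) (state_sum j (m / 2 ^ l)).
Proof.
  induction l as [|l IH]; intros j m i.
  - cbn [Nat.add low_bits transition_paths wsum fold_right fst snd].
    rewrite Nat.pow_0_r, Nat.div_1_r, expi_0. ring.
  - rewrite Nat.add_succ_l, state_sum_succ. cbn [low_bits transition_paths].
    rewrite wsum_flat_map. apply wsum_ext. intro i'.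
    rewrite IH, Nat.pow_succ_r', Nat.Div0.div_div. reflexivity.
Qed.

End ExponentialSums.

Lemma cos_half_le th : Rabs th <= PI -> 0 <= cos (th / 2) <= 1 - th ^ 2 / 16.
Proof.
  intros Hth. apply Rabs_le_between in Hth. pose proof PI_4 as HPI4. pose proof PI_RGT_0 as HPI0.
  split; [apply cos_ge_0; lra|].
  destruct (cos_bound (th / 2) 0) as [_ Hcos]; try lra.
  assert (Happrox : cos_approx (th / 2) (2 * (0 + 1)) = 1 - (th / 2) ^ 2 / 2 + (th / 2) ^ 4 / 24)
    by (unfold cos_approx, cos_term; simpl; field).
  rewrite Happrox in Hcos. assert (th ^ 2 <= 16) by nra. nra.
Qed.

Lemma Cmod_1_add_cexpi_le th : Rabs th <= PI -> Cmod (Cplus 1 (cexpi th)) <= 2 - th ^ 2 / 8.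
Proof.
  intros Hth. pose proof (cos_half_le th Hth) as [Hc0 Hc1].
  assert (Hcos : cos th = 2 * cos (th / 2) * cos (th / 2) - 1)
    by (rewrite <- cos_2a_cos; f_equal; field).
  assert (Hsq : Cmod (Cplus 1 (cexpi th)) = sqrt (2 + 2 * cos th)).
  { unfold Cmod, cexpi. simpl. f_equal.
    pose proof (sin2_cos2 th) as H. rewrite !Rsqr_pow2 in H. nra. }
  apply Rabs_le_between in Hth. pose proof PI_4.
  assert (th ^ 2 <= 16) by nra.
  rewrite Hsq, <- (sqrt_pow2 (2 - th ^ 2 / 8)) by nra.
  apply sqrt_le_1_alt. rewrite Hcos. nra.
Qed.

Section Cancellation.
Variable th : R.
Hypothesis Hth : Rabs th <= PI.
Local Open Scope C_scope.

Lemma Cmod_expi_add_expi_le a b : Z.abs (a - b) = 1%Z ->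
  (Cmod (expi th a + expi th b) <= 2 - th ^ 2 / 8)%R.
Proof.
  intros Hab. assert (Hd : (b = a + 1 \/ b = a + -1)%Z) by lia.
  assert (Hfactor : forall d, expi th a + expi th (a + d) = expi th a * (1 + cexpi (IZR d * th)))
    by (intro d; rewrite expi_add; unfold expi; ring).
  destruct Hd as [-> | ->]; rewrite Hfactor, Cmod_mult, Cmod_expi, Rmult_1_l.
  - rewrite Rmult_1_l. apply Cmod_1_add_cexpi_le, Hth.
  - replace (IZR (-1) * th)%R with (- th)%R by (simpl; ring).
    replace (th ^ 2)%R with ((- th) ^ 2)%R by ring.
    apply Cmod_1_add_cexpi_le. rewrite Rabs_Ropp. exact Hth.
Qed.

Lemma Cmod_wsum_le l g K :
  (forall i, Cmod (g i) <= K)%R -> (Cmod (wsum th l g) <= INR (length l) * K)%R.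
Proof.
  intros H. induction l as [|p l IH]; cbn [wsum fold_right length].
  - rewrite Cmod_0. simpl. lra.
  - fold (wsum th l g). eapply Rle_trans; [apply Cmod_triangle|].
    rewrite Cmod_mult, Cmod_expi, S_INR. specialize (H (snd p)). lra.
Qed.

Definition state_eqb (i i' : state) : bool :=
  let '(a, b, c) := i in let '(a', b', c') := i' in Bool.eqb a a' && Bool.eqb b b' && Bool.eqb c c'.

Lemma state_eqb_eq i i' : state_eqb i i' = true -> i = i'.
Proof.
  destruct i as [[a b] c], i' as [[a' b'] c']. simpl.
  intros H. apply andb_prop in H as [H H3]. apply andb_prop in H as [H1 H2].
  apply eqb_prop in H1, H2, H3. subst. reflexivity.
Qed.

Fixpoint has_collision (l : list (Z * state)) : bool :=
  match l with
  | [] => false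
  | p :: l' =>
      existsb (fun q => state_eqb (snd p) (snd q) && (Z.abs (fst p - fst q) =? 1)%Z) l'
      || has_collision l'
  end.

Lemma Cmod_wsum_collision_le l g K : has_collision l = true -> (forall i, Cmod (g i) <= K)%R ->
  (Cmod (wsum th l g) <= (INR (length l) - 2) * K + (2 - th ^ 2 / 8) * K)%R.
Proof.
  intros Hcol Hg. induction l as [|p l IH]; [discriminate|].
  cbn [wsum fold_right]; fold (wsum th l g). rewrite length_cons, S_INR.
  simpl in Hcol. apply orb_true_iff in Hcol as [Hcol|Hcol].
  - apply existsb_exists in Hcol as [q [Hq Hpq]]. apply andb_prop in Hpq as [Hi Hz].
    apply state_eqb_eq in Hi. apply Z.eqb_eq in Hz.
    apply in_split in Hq as [l1 [l2 ->]].
    rewrite wsum_app. cbn [wsum fold_right]. fold (wsum th l2 g). rewrite Hi.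
    replace (expi th (fst p) * g (snd q) +
             (wsum th l1 g + (expi th (fst q) * g (snd q) + wsum th l2 g)))
      with ((expi th (fst p) + expi th (fst q)) * g (snd q) + (wsum th l1 g + wsum th l2 g))
      by ring.
    eapply Rle_trans; [apply Cmod_triangle|]. rewrite Cmod_mult.
    pose proof (Cmod_triangle (wsum th l1 g) (wsum th l2 g)).
    pose proof (Cmod_wsum_le l1 g K Hg). pose proof (Cmod_wsum_le l2 g K Hg).
    assert (Cmod (expi th (fst p) + expi th (fst q)) * Cmod (g (snd q)) <= (2 - th ^ 2 / 8) * K)%R.
    { apply Rmult_le_compat; [apply Cmod_ge_0|apply Cmod_ge_0| |apply Hg].
      apply Cmod_expi_add_expi_le, Hz. }
    rewrite length_app, length_cons, plus_INR, S_INR. lra.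
  - eapply Rle_trans; [apply Cmod_triangle|]. rewrite Cmod_mult, Cmod_expi.
    specialize (IH Hcol). specialize (Hg (snd p)). lra.
Qed.

End Cancellation.

Definition all_equal (w : list bool) : bool :=
  match w with [] => true | b :: w' => forallb (Bool.eqb b) w' end.

Lemma transition_paths_collision b0 b1 b2 b3 i : all_equal [b0; b1; b2; b3] = false ->
  has_collision (transition_paths [b0; b1; b2; b3] i) = true.
Proof.
  destruct i as [[s u] v].
  destruct b0, b1, b2, b3, s, u, v; vm_compute; intro H; first [reflexivity | discriminate H].
Qed.

Fixpoint window_count (j m : nat) : nat :=
  match j with
  | S ((S (S (S j'))) as j1) =>
      if all_equal (low_bits m 4) then window_count j1 (m / 2) else S (window_count j' (m / 16))
  | _ => 0
  end.

Fixpoint bit_changes (j m : nat) : nat :=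
  match j with
  | S ((S _) as j1) => (Nat.b2n (xorb (Nat.odd m) (Nat.odd (m / 2))) + bit_changes j1 (m / 2))%nat
  | _ => 0
  end.

Lemma window_count_succ4 j m : window_count (S (S (S (S j)))) m =
  if all_equal (low_bits m 4) then window_count (S (S (S j))) (m / 2)
  else S (window_count j (m / 16)).
Proof. reflexivity. Qed.

Lemma pow_le_pow_decr x a b : 0 <= x <= 1 -> (a <= b)%nat -> x ^ b <= x ^ a.
Proof.
  intros Hx Hab. replace b with (a + (b - a))%nat by lia. rewrite pow_add.
  pose proof (pow_le x a (proj1 Hx)). pose proof (pow_le x (b - a) (proj1 Hx)).
  pose proof (pow_incr x 1 (b - a)). rewrite pow1 in *. nra.
Qed.

Section WindowBound.
Variable th : R.
Hypothesis Hth : Rabs th <= PI.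

Lemma Cmod_state_sum_le j : forall m i,
  Cmod (state_sum th j m i) <= 2 ^ j * (1 - th ^ 2 / 128) ^ window_count j m.
Proof.
  induction j as [j IH] using (well_founded_induction lt_wf). intros m [[s u] v].
  destruct j as [|[|[|[|j']]]];
    try (simpl window_count; rewrite pow_O, Rmult_1_r; apply Cmod_twisted_sum_le).
  rewrite window_count_succ4. destruct (all_equal (low_bits m 4)) eqn:Hc.
  - rewrite state_sum_succ.
    eapply Rle_trans; [apply Cmod_wsum_le; intro i; apply IH; lia|].
    change (INR (length (transitions (Nat.odd m) (s, u, v)))) with 2.
    change (2 ^ S (S (S (S j'))))%R with (2 * 2 ^ S (S (S j')))%R. lra.
  - replace (S (S (S (S j')))) with (4 + j')%nat by lia. rewrite state_sum_paths.
    eapply Rle_trans; [apply Cmod_wsum_collision_le; [exact Hth| |intro i; apply IH; lia]|].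
    + revert Hc. cbn [low_bits]. apply transition_paths_collision.
    + rewrite length_transition_paths. cbn [low_bits length].
      replace (INR (2 ^ 4)) with 16 by (simpl; lra).
      change (m / 2 ^ 4)%nat with (m / 16)%nat. rewrite pow_add. simpl pow. lra.
Qed.

End WindowBound.

Lemma bit_changes_succ2 j m : bit_changes (S (S j)) m =
  (Nat.b2n (xorb (Nat.odd m) (Nat.odd (m / 2))) + bit_changes (S j) (m / 2))%nat.
Proof. reflexivity. Qed.

Lemma bit_changes_succ_le j m : (bit_changes (S j) m <= 1 + bit_changes j (m / 2))%nat.
Proof. destruct j; [simpl; lia|]. rewrite bit_changes_succ2. destruct (xorb _ _); simpl; lia. Qed.

Lemma bit_changes_le_pred j m : (bit_changes j m <= j - 1)%nat.
Proof.
  revert m; induction j as [|j IH]; intros m; [simpl; lia|].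
  pose proof (bit_changes_succ_le j m). pose proof (IH (m / 2)%nat). destruct j; simpl in *; lia.
Qed.

Lemma bit_changes_le_window_count j : forall m, (bit_changes j m <= 4 * window_count j m + 2)%nat.
Proof.
  induction j as [j IH] using (well_founded_induction lt_wf). intros m.
  pose proof (bit_changes_le_pred j m) as Hle.
  destruct j as [|[|[|[|j']]]]; try (simpl in Hle |- *; lia).
  rewrite window_count_succ4. destruct (all_equal (low_bits m 4)) eqn:Hc.
  - cbn [low_bits all_equal forallb] in Hc.
    apply andb_prop in Hc as [Hsame _]. apply eqb_prop in Hsame.
    rewrite bit_changes_succ2, Hsame, xorb_nilpotent.
    pose proof (IH (S (S (S j'))) ltac:(lia) (m / 2)%nat). simpl Nat.b2n. lia.
  - assert (Hdiv : forall k, (m / k / 2 = m / (k * 2))%nat) by (intro; apply Nat.Div0.div_div).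
    pose proof (bit_changes_succ_le (S (S (S j'))) m).
    pose proof (bit_changes_succ_le (S (S j')) (m / 2)). rewrite Hdiv in *.
    pose proof (bit_changes_succ_le (S j') (m / 4)). rewrite Hdiv in *.
    pose proof (bit_changes_succ_le j' (m / 8)). rewrite Hdiv in *.
    pose proof (IH j' ltac:(lia) (m / 16)%nat). simpl Nat.mul in *. lia.
Qed.

Lemma bit_changes_zero j : bit_changes j 0 = 0%nat.
Proof.
  induction j as [|j IH]; [reflexivity|]. destruct j; [reflexivity|].
  rewrite bit_changes_succ2. change (0 / 2)%nat with 0%nat. rewrite IH. reflexivity.
Qed.

(* Each maximal block of 1s yields a digit change at its upper end (digit [j - 1] is 0) and
   one at its lower end, unless it reaches digit 0. *)
Lemma bit_changes_blocks01 t : forall j, (2 * t < 2 ^ j)%nat ->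
  (bit_changes j t + Nat.b2n (Nat.odd t) = 2 * blocks01 t)%nat.
Proof.
  induction t as [t IH] using (well_founded_induction lt_wf). intros j Hj.
  destruct (Nat.eq_dec t 0) as [->|Ht]; [rewrite bit_changes_zero; reflexivity|].
  destruct j as [|[|j]]; [simpl in Hj; lia|simpl in Hj; lia|].
  pose proof (blocks01_double_add (t / 2) (Nat.odd t)) as Hblocks.
  rewrite <- double_add_odd_div2 in Hblocks. rewrite bit_changes_succ2, Hblocks.
  assert (Hy : (2 * (t / 2) < 2 ^ S j)%nat).
  { rewrite !Nat.pow_succ_r' in *. pose proof (Nat.Div0.mul_div_le t 2). lia. }
  specialize (IH (t / 2)%nat ltac:(apply Nat.div_lt; lia) (S j) Hy).
  destruct (Nat.odd t), (Nat.odd (t / 2)); cbn [xorb negb andb Nat.b2n] in *; lia.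
Qed.

Lemma Cmod_twisted_sum_blocks01_le th t j : Rabs th <= PI -> (2 * t < 2 ^ j)%nat ->
  Cmod (twisted_sum th j t false false) <= 2 ^ j * (1 - th ^ 2 / 128) ^ (blocks01 t / 2).
Proof.
  intros Hth Hj.
  assert (Hc : 0 <= 1 - th ^ 2 / 128 <= 1).
  { apply Rabs_le_between in Hth. pose proof PI_4. pose proof (pow2_ge_0 th). nra. }
  assert (Hw : (blocks01 t / 2 <= window_count j t)%nat).
  { pose proof (bit_changes_blocks01 t j Hj). pose proof (bit_changes_le_window_count j t).
    pose proof (Nat.Div0.mul_div_le (blocks01 t) 2). destruct (Nat.odd t); simpl in *; lia. }
  pose proof (Cmod_state_sum_le th Hth j t (false, false, false)) as H.
  cbn [state_sum Nat.b2n] in H. rewrite Nat.add_0_r in H.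
  eapply Rle_trans; [exact H|].
  apply Rmult_le_compat_l; [apply pow_le; lra|]. apply pow_le_pow_decr; assumption.
Qed.

(** * Densities *)

Fixpoint count_below (p : nat -> bool) (M : nat) : nat :=
  match M with O => O | S M' => (count_below p M' + Nat.b2n (p M'))%nat end.

Lemma length_filter_seq p M : length (filter p (seq 0 M)) = count_below p M.
Proof.
  induction M as [|M IH]; [reflexivity|].
  rewrite seq_S, filter_app, length_app, IH. simpl. destruct (p M); reflexivity.
Qed.

Lemma count_below_ext p q M :
  (forall x, (x < M)%nat -> p x = q x) -> count_below p M = count_below q M.
Proof.
  induction M; intros H; simpl; [reflexivity|].
  rewrite IHM by (intros; apply H; lia). rewrite H by lia. reflexivity.
Qed.

Lemma count_below_false p M : (forall x, (x < M)%nat -> p x = false) -> count_below p M = 0%nat.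
Proof.
  induction M; intros H; simpl; [reflexivity|].
  rewrite IHM by (intros; apply H; lia). rewrite H by lia. reflexivity.
Qed.

Lemma count_below_le_or p q r M : (forall x, (x < M)%nat -> p x = true -> q x || r x = true) ->
  (count_below p M <= count_below q M + count_below r M)%nat.
Proof.
  induction M; intros H; simpl; [lia|]. specialize (IHM (fun x Hx => H x ltac:(lia))).
  specialize (H M ltac:(lia)).
  destruct (p M), (q M), (r M); simpl in *; try lia; discriminate (H eq_refl).
Qed.

Lemma count_below_le_imp p q M : (forall x, (x < M)%nat -> p x = true -> q x = true) ->
  (count_below p M <= count_below q M)%nat.
Proof.
  induction M; intros H; simpl; [lia|]. specialize (IHM (fun x Hx => H x ltac:(lia))).
  specialize (H M ltac:(lia)).
  destruct (p M), (q M); simpl in *; try lia; discriminate (H eq_refl).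
Qed.

Lemma count_below_mono p M M' : (M <= M')%nat -> (count_below p M <= count_below p M')%nat.
Proof. induction 1; simpl; lia. Qed.

Lemma count_below_add_negb p M : (count_below p M + count_below (fun x => negb (p x)) M = M)%nat.
Proof. induction M; simpl; [lia|]. destruct (p M); simpl; lia. Qed.

Lemma count_below_add p a b :
  count_below p (a + b) = (count_below p a + count_below (fun x => p (a + x)%nat) b)%nat.
Proof.
  induction b; simpl; [rewrite Nat.add_0_r; lia|].
  rewrite Nat.add_succ_r. simpl. rewrite IHb. lia.
Qed.

Lemma count_below_periodic f N q : (0 < N)%nat ->
  count_below (fun n => f (n mod N)) (q * N) = (q * count_below f N)%nat.
Proof.
  intros HN. induction q as [|q IH]; [reflexivity|].
  replace (S q * N)%nat with (q * N + N)%nat by lia. rewrite count_below_add, IH.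
  rewrite (count_below_ext (fun x => f ((q * N + x) mod N)) f N); [lia|].
  intros x Hx. f_equal. rewrite Nat.add_comm, Nat.Div0.mod_add. apply Nat.mod_small, Hx.
Qed.

(* Adding [t] to [x] changes neither digit [j] of [x] nor any higher digit. *)
Definition carry_free (t j x : nat) : bool :=
  (x + t <? 2 ^ j) || ((2 ^ j <=? x) && (x + t <? 2 ^ S j)).

Lemma dd_mod_carry_free t j n : carry_free t j (n mod 2 ^ S j) = true ->
  dd t n = dd t (n mod 2 ^ S j).
Proof.
  intros Hc. set (x := (n mod 2 ^ S j)%nat) in *. set (h := (n / 2 ^ S j)%nat).
  pose proof (Nat.pow_nonzero 2 j ltac:(lia)).
  assert (HN : (2 ^ S j = 2 * 2 ^ j)%nat) by apply Nat.pow_succ_r'.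
  assert (Hn : n = (h * 2 ^ S j + x)%nat)
    by (unfold h, x; rewrite Nat.mul_comm; apply Nat.div_mod; lia).
  assert (Hx : (x < 2 ^ S j)%nat) by (apply Nat.mod_upper_bound; lia).
  unfold carry_free in Hc. unfold dd. rewrite Hn at 1 2.
  replace (h * 2 ^ S j + x + t)%nat with (h * 2 ^ S j + (x + t))%nat by lia.
  apply orb_true_iff in Hc as [Hc|Hc].
  - apply Nat.ltb_lt in Hc. rewrite !r11_concat by lia.
    replace (2 ^ j <=? x + t) with false by (symmetry; apply Nat.leb_gt; lia).
    replace (2 ^ j <=? x) with false by (symmetry; apply Nat.leb_gt; lia). lia.
  - apply andb_prop in Hc as [H1 H2]. apply Nat.leb_le in H1. apply Nat.ltb_lt in H2.
    rewrite !r11_concat by lia.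
    replace (2 ^ j <=? x + t) with true by (symmetry; apply Nat.leb_le; lia).
    replace (2 ^ j <=? x) with true by (symmetry; apply Nat.leb_le; lia). lia.
Qed.

Definition good_count (t j : nat) (k : Z) : nat :=
  count_below (fun x => carry_free t j x && Z.eqb (dd t x) k) (2 ^ S j).

Definition bad_count (t j : nat) : nat := count_below (fun x => negb (carry_free t j x)) (2 ^ S j).

Lemma bad_count_le t j : (bad_count t j <= 2 * t)%nat.
Proof.
  unfold bad_count. rewrite <- length_filter_seq.
  apply Nat.le_trans with (length (seq (2 ^ j - t) t ++ seq (2 ^ S j - t) t));
    [|rewrite length_app, !length_seq; lia].
  apply NoDup_incl_length; [apply NoDup_filter, seq_NoDup|].
  intros x Hx. apply filter_In in Hx as [Hx Hbad]. apply in_seq in Hx.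
  unfold carry_free in Hbad. rewrite Nat.pow_succ_r' in *.
  apply negb_true_iff, orb_false_iff in Hbad as [H1 H2]. apply Nat.ltb_ge in H1.
  apply in_or_app. rewrite !in_seq.
  destruct (2 ^ j <=? x) eqn:E; simpl in H2.
  - apply Nat.ltb_ge in H2. apply Nat.leb_le in E. right. lia.
  - apply Nat.leb_gt in E. left. lia.
Qed.

Lemma INR_bad_count_le t j : INR (bad_count t j) <= 2 * INR t.
Proof. change 2 with (INR 2). rewrite <- mult_INR. apply le_INR, bad_count_le. Qed.

Lemma count_d_ge t j k M : ((M / 2 ^ S j) * good_count t j k <= count_d t k M)%nat.
Proof.
  set (N := (2 ^ S j)%nat).
  assert (HN : (0 < N)%nat) by (apply Nat.neq_0_lt_0, Nat.pow_nonzero; lia).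
  unfold count_d, good_count. rewrite length_filter_seq. fold N.
  rewrite <- count_below_periodic by exact HN.
  apply Nat.le_trans with (count_below (fun n => Z.eqb (dd t n) k) (M / N * N)).
  2:{ apply count_below_mono. rewrite Nat.mul_comm. apply Nat.Div0.mul_div_le. }
  apply count_below_le_imp. intros x _ Hx. apply andb_prop in Hx as [Hc He].
  apply Z.eqb_eq in He. apply Z.eqb_eq. rewrite <- He. apply dd_mod_carry_free, Hc.
Qed.

Lemma count_d_le t j k M :
  (count_d t k M <= (M / 2 ^ S j + 1) * (good_count t j k + bad_count t j))%nat.
Proof.
  set (N := (2 ^ S j)%nat).
  assert (HN : (0 < N)%nat) by (apply Nat.neq_0_lt_0, Nat.pow_nonzero; lia).
  unfold count_d, good_count, bad_count. rewrite length_filter_seq. fold N.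
  eapply Nat.le_trans; [apply (count_below_mono _ M ((M / N + 1) * N))|].
  { pose proof (Nat.div_mod M N ltac:(lia)). pose proof (Nat.mod_upper_bound M N ltac:(lia)). nia. }
  rewrite Nat.mul_add_distr_l, <- !count_below_periodic by exact HN.
  apply count_below_le_or. intros x _ Hx. apply Z.eqb_eq in Hx.
  destruct (carry_free t j (x mod N)) eqn:Hc; [|reflexivity].
  rewrite orb_false_r. simpl. apply Z.eqb_eq.
  unfold N in *. rewrite <- dd_mod_carry_free; assumption.
Qed.

Lemma is_lim_seq_add_div a b : is_lim_seq (fun M => a + b / INR M) a.
Proof.
  assert (Hinv : is_lim_seq (fun M => / INR M) 0).
  { replace (Finite 0) with (Rbar_inv p_infty) by reflexivity.
    apply is_lim_seq_inv; [apply is_lim_seq_INR|discriminate]. }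
  pose proof (is_lim_seq_plus' _ _ a (b * 0) (is_lim_seq_const a) (is_lim_seq_scal_l _ b _ Hinv)).
  rewrite Rmult_0_r, Rplus_0_r in H. exact H.
Qed.

Section RatioLimit.
Variables (f : nat -> nat) (N a b : nat).
Hypothesis HN : (0 < N)%nat.
Hypothesis Hlow : forall M, ((M / N) * a <= f M)%nat.
Hypothesis Hup : forall M, (f M <= (M / N + 1) * b)%nat.

Lemma Lim_seq_ratio_ge : Rbar_le (INR a / INR N) (Lim_seq (fun M => INR (f M) / INR M)).
Proof.
  rewrite <- (is_lim_seq_unique _ _ (is_lim_seq_add_div (INR a / INR N) (- INR a))).
  apply Lim_seq_le_loc. exists 1%nat. intros M HM.
  pose proof (lt_0_INR N HN). pose proof (lt_0_INR M ltac:(lia)). pose proof (pos_INR a).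
  assert (Hq : INR M < (INR (M / N) + 1) * INR N).
  { rewrite <- S_INR, <- mult_INR. apply lt_INR.
    pose proof (Nat.div_mod M N ltac:(lia)). pose proof (Nat.mod_upper_bound M N ltac:(lia)). nia. }
  pose proof (le_INR _ _ (Hlow M)) as Hc. rewrite mult_INR in Hc.
  apply Rmult_le_reg_r with (INR N * INR M); [nra|].
  field_simplify; [|lra|lra]. nra.
Qed.

Lemma Lim_seq_ratio_le : Rbar_le (Lim_seq (fun M => INR (f M) / INR M)) (INR b / INR N).
Proof.
  rewrite <- (is_lim_seq_unique _ _ (is_lim_seq_add_div (INR b / INR N) (INR b))).
  apply Lim_seq_le_loc. exists 1%nat. intros M HM.
  pose proof (lt_0_INR N HN). pose proof (lt_0_INR M ltac:(lia)). pose proof (pos_INR b).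
  assert (Hq : INR (M / N) * INR N <= INR M).
  { rewrite <- mult_INR. apply le_INR. rewrite Nat.mul_comm. apply Nat.Div0.mul_div_le. }
  pose proof (le_INR _ _ (Hup M)) as Hc. rewrite mult_INR, plus_INR in Hc. simpl INR in Hc.
  apply Rmult_le_reg_r with (INR N * INR M); [nra|].
  field_simplify; [|lra|lra]. nra.
Qed.

End RatioLimit.

Lemma real_between (L : Rbar) (a b : R) : Rbar_le a L -> Rbar_le L b -> a <= real L <= b.
Proof. destruct L as [r| |]; simpl; intros H1 H2; try contradiction; split; assumption. Qed.

Lemma c_t_between t j k :
  INR (good_count t j k) / INR (2 ^ S j) <= c_t t k <=
  INR (good_count t j k + bad_count t j) / INR (2 ^ S j).
Proof.
  assert (HN : (0 < 2 ^ S j)%nat) by (apply Nat.neq_0_lt_0, Nat.pow_nonzero; lia).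
  unfold c_t. apply real_between.
  - apply Lim_seq_ratio_ge; [exact HN|]. intro M. apply count_d_ge.
  - apply Lim_seq_ratio_le; [exact HN|]. intro M. apply count_d_le.
Qed.

(** * Approximating gamma_t by finite averages *)

Definition lsum {A : Type} (l : list A) (g : A -> R) : R := fold_right (fun k acc => g k + acc) 0 l.

Section ListSums.
Context {A : Type}.
Implicit Types (l : list A) (f g : A -> R).

Lemma lsum_ext l f g : (forall k, In k l -> f k = g k) -> lsum l f = lsum l g.
Proof.
  induction l as [|a l IH]; intros H; simpl; [reflexivity|].
  rewrite H by (left; reflexivity). rewrite IH by (intros; apply H; right; assumption).
  reflexivity.
Qed.

Lemma lsum_le l f g : (forall k, In k l -> f k <= g k) -> lsum l f <= lsum l g.
Proof.
  induction l as [|a l IH]; intros H; simpl; [lra|].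
  pose proof (H a (or_introl eq_refl)). pose proof (IH (fun k Hk => H k (or_intror Hk))). lra.
Qed.

Lemma lsum_plus l f g : lsum l (fun k => f k + g k) = lsum l f + lsum l g.
Proof. induction l; simpl; [ring|]. rewrite IHl. ring. Qed.

Lemma lsum_scal l c f : lsum l (fun k => c * f k) = c * lsum l f.
Proof. induction l; simpl; [ring|]. rewrite IHl. ring. Qed.

Lemma lsum_app l1 l2 f : lsum (l1 ++ l2) f = lsum l1 f + lsum l2 f.
Proof. induction l1; simpl; [ring|]. rewrite IHl1. ring. Qed.

Lemma lsum_nonneg l f : (forall k, 0 <= f k) -> 0 <= lsum l f.
Proof. intros H; induction l; simpl; [lra|]. specialize (H a). lra. Qed.

Lemma lsum_const l c : lsum l (fun _ => c) = INR (length l) * c.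
Proof. induction l; simpl lsum; simpl length; [simpl; ring|]. rewrite S_INR, IHl. ring. Qed.

Lemma Rabs_lsum_le l f : Rabs (lsum l f) <= lsum l (fun k => Rabs (f k)).
Proof.
  induction l; simpl; [rewrite Rabs_R0; lra|].
  eapply Rle_trans; [apply Rabs_triang|]. lra.
Qed.

Lemma lsum_map {B : Type} (e : B -> A) (l : list B) f :
  lsum (map e l) f = lsum l (fun m => f (e m)).
Proof. induction l; simpl; [reflexivity|]. rewrite IHl. reflexivity. Qed.

End ListSums.

Lemma lsum_seq_S f M : lsum (seq 0 (S M)) f = lsum (seq 0 M) f + f M.
Proof. rewrite seq_S, lsum_app. simpl. ring. Qed.

Lemma sum_n_lsum (a : nat -> R) K : sum_n a K = lsum (seq 0 (S K)) a.
Proof.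
  induction K; [rewrite sum_O; simpl; symmetry; apply Rplus_0_r|].
  rewrite sum_Sn, IHK, (lsum_seq_S _ (S K)). reflexivity.
Qed.

Lemma lsum_indicator (p : nat -> bool) M :
  lsum (seq 0 M) (fun x => if p x then 1 else 0) = INR (count_below p M).
Proof.
  induction M; [reflexivity|]. rewrite lsum_seq_S, IHM. simpl count_below.
  rewrite plus_INR. destruct (p M); simpl; ring.
Qed.

Lemma lsum_point F z (w : Z -> R) : NoDup F ->
  lsum F (fun k => if Z.eqb z k then w k else 0) = if in_dec Z.eq_dec z F then w z else 0.
Proof.
  induction F as [|a F IH]; intros Hnd; [reflexivity|].
  inversion Hnd as [|? ? Hna Hnd']; subst. simpl. rewrite IH by exact Hnd'.
  destruct (Z.eqb_spec z a) as [->|Hne].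
  - destruct (in_dec Z.eq_dec a F); [contradiction|]. destruct (Z.eq_dec a a); [ring|congruence].
  - destruct (in_dec Z.eq_dec z F), (Z.eq_dec a z); try congruence; ring.
Qed.

Lemma lsum_count_values F (P : nat -> bool) (d : nat -> Z) (w : Z -> R) M : NoDup F ->
  lsum F (fun k => INR (count_below (fun x => P x && Z.eqb (d x) k) M) * w k) =
  lsum (seq 0 M) (fun x => if P x then if in_dec Z.eq_dec (d x) F then w (d x) else 0 else 0).
Proof.
  intros Hnd. induction M as [|M IH].
  - simpl. induction F; simpl; [reflexivity|].
    inversion Hnd; subst. rewrite IHF by assumption. ring.
  - rewrite lsum_seq_S, <- IH. destruct (P M) eqn:HP.
    + rewrite <- (lsum_point F (d M)), <- lsum_plus by exact Hnd.
      apply lsum_ext. intros k _. simpl count_below. rewrite HP, plus_INR.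
      destruct (Z.eqb (d M) k); simpl; ring.
    + rewrite Rplus_0_r. apply lsum_ext. intros k _. simpl count_below.
      rewrite HP, Nat.add_0_r. reflexivity.
Qed.

Lemma le_of_le_add_div_pow2 x y C j0 : (forall j, (j0 <= j)%nat -> x <= y + C / 2 ^ j) -> x <= y.
Proof.
  intros H. destruct (Rle_or_lt x y) as [|Hlt]; [assumption|exfalso].
  destruct (INR_unbounded (C / (x - y))) as [n Hn].
  specialize (H (max n j0) ltac:(lia)). set (j := max n j0) in *.
  assert (Hj : INR n < 2 ^ j).
  { rewrite <- INR_pow2. apply lt_INR. pose proof (Nat.pow_gt_lin_r 2 j ltac:(lia)). lia. }
  pose proof (pow_lt 2 j ltac:(lra)).
  assert (C < (x - y) * 2 ^ j).
  { apply (Rmult_lt_reg_r (/ (x - y))); [apply Rinv_0_lt_compat; lra|].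
    field_simplify; lra. }
  assert (C / 2 ^ j < x - y) by (apply Rmult_lt_reg_r with (2 ^ j); [lra|]; field_simplify; lra).
  lra.
Qed.

Lemma lsum_c_t_le_1 t F : NoDup F -> lsum F (c_t t) <= 1.
Proof.
  intros Hnd. apply (le_of_le_add_div_pow2 _ _ (INR (length F) * INR t) 0). intros j _.
  set (N := (2 ^ S j)%nat). pose proof (INR_pow2_pos (S j)) as HN. fold N in HN.
  apply Rle_trans with
    (lsum F (fun k => / INR N * (INR (good_count t j k) * 1) + / INR N * INR (bad_count t j))).
  { apply lsum_le. intros k _. pose proof (c_t_between t j k) as [_ Hc]. fold N in Hc.
    rewrite plus_INR in Hc. unfold Rdiv in Hc. lra. }
  rewrite lsum_plus, !lsum_scal, lsum_const. unfold good_count. fold N.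
  rewrite lsum_count_values by exact Hnd.
  assert (Hgood : lsum (seq 0 N) (fun x => if carry_free t j x then
                    if in_dec Z.eq_dec (dd t x) F then 1 else 0 else 0) <= INR N).
  { apply Rle_trans with (lsum (seq 0 N) (fun _ => 1)); [|rewrite lsum_const, length_seq; lra].
    apply lsum_le. intros x _. destruct (carry_free t j x), (in_dec Z.eq_dec (dd t x) F); lra. }
  pose proof (INR_bad_count_le t j) as Hbad.
  assert (HNj : INR N = 2 * 2 ^ j) by (unfold N; rewrite INR_pow2; reflexivity).
  pose proof (pos_INR (length F)).
  apply Rmult_le_reg_l with (INR N); [exact HN|].
  rewrite Rmult_plus_distr_l, <- !Rmult_assoc, Rinv_r, !Rmult_1_l by lra.
  replace (INR N * (1 + INR (length F) * INR t / 2 ^ j))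
    with (INR N + INR (length F) * (2 * INR t)) by (rewrite HNj; field; apply pow_nonzero; lra).
  nra.
Qed.

Definition neg_index (m : nat) : Z := (- Z.of_nat m - 1)%Z.

Definition Zrange (K : nat) : list Z :=
  map Z.of_nat (seq 0 (S K)) ++ map neg_index (seq 0 (S K)).

Lemma NoDup_Zrange K : NoDup (Zrange K).
Proof.
  apply NoDup_app.
  - apply NoDup_map_NoDup_ForallPairs; [intros a b _ _; lia|apply seq_NoDup].
  - apply NoDup_map_NoDup_ForallPairs; [intros a b _ _; unfold neg_index; lia|apply seq_NoDup].
  - intros k Hpos Hneg. apply in_map_iff in Hpos as [a [Ha _]], Hneg as [b [Hb _]].
    unfold neg_index in Hb. lia.
Qed.

Lemma In_Zrange K k : (- Z.of_nat K - 1 <= k <= Z.of_nat K)%Z -> In k (Zrange K).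
Proof.
  intros Hk. apply in_or_app. destruct (Z_le_gt_dec 0 k).
  - left. apply in_map_iff. exists (Z.to_nat k). rewrite in_seq. lia.
  - right. apply in_map_iff. exists (Z.to_nat (- k - 1)). unfold neg_index. rewrite in_seq. lia.
Qed.

Lemma dd_between t x : (- Z.of_nat (x + t + 2) <= dd t x <= Z.of_nat (x + t + 2))%Z.
Proof. unfold dd. pose proof (r11_le (x + t)). pose proof (r11_le x). lia. Qed.

Lemma Rabs_Series_perturb_le (g h psi : nat -> R) K0 H :
  (forall m, 0 <= h m) -> (forall K, (K0 <= K)%nat -> lsum (seq 0 (S K)) h <= H) ->
  (forall m, (K0 < m)%nat -> g m = 0) -> (forall m, Rabs (psi m) <= 1) ->
  Rabs (Series (fun m => (g m + h m) * psi m) - lsum (seq 0 (S K0)) (fun m => g m * psi m)) <= H.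
Proof.
  intros Hh HH Hg Hpsi.
  set (A := lsum (seq 0 (S K0)) (fun m => g m * psi m)).
  assert (Hpart : forall K, (K0 <= K)%nat ->
            A - H <= sum_n (fun m => (g m + h m) * psi m) K <= A + H).
  { intros K HK. rewrite sum_n_lsum.
    rewrite (lsum_ext _ _ (fun m => g m * psi m + h m * psi m)) by (intros; ring).
    rewrite lsum_plus.
    assert (Hg_sum : lsum (seq 0 (S K)) (fun m => g m * psi m) = A).
    { replace (S K) with (S K0 + (K - K0))%nat by lia. rewrite seq_app, lsum_app.
      rewrite (lsum_ext (seq (0 + S K0) _) _ (fun _ => 0)), lsum_const, Rmult_0_r, Rplus_0_r
        by (intros m Hm; apply in_seq in Hm; rewrite Hg by lia; ring).
      reflexivity. }
    assert (Hh_sum : Rabs (lsum (seq 0 (S K)) (fun m => h m * psi m)) <= H).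
    { eapply Rle_trans; [apply Rabs_lsum_le|]. eapply Rle_trans; [|exact (HH K HK)].
      apply lsum_le. intros m _. rewrite Rabs_mult, (Rabs_pos_eq (h m)) by apply Hh.
      pose proof (Hh m). pose proof (Hpsi m). nra. }
    rewrite Hg_sum. apply Rabs_le_between in Hh_sum. lra. }
  assert (Hlim : A - H <= Series (fun m => (g m + h m) * psi m) <= A + H).
  { apply real_between; rewrite <- Lim_seq_const; apply Lim_seq_le_loc;
      exists K0; intros K HK; apply Hpart, HK. }
  apply Rabs_le. lra.
Qed.

Section GoodApproximation.
Variables (t j : nat).

Let N := (2 ^ S j)%nat.
Let K0 := (N + t + 2)%nat.

Definition good_density (k : Z) : R := INR (good_count t j k) / INR N.

Lemma good_density_le_c_t k : good_density k <= c_t t k.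
Proof. apply (c_t_between t j k). Qed.

Lemma good_count_out_of_range k : (k < - Z.of_nat K0 - 1 \/ Z.of_nat K0 < k)%Z ->
  good_count t j k = 0%nat.
Proof.
  intros Hk. apply count_below_false. intros x Hx.
  pose proof (dd_between t x). destruct (carry_free t j x); [|reflexivity].
  apply Z.eqb_neq. fold N in Hx. unfold K0 in Hk. lia.
Qed.

Lemma lsum_Zrange_good_density K (w : Z -> R) : (K0 <= K)%nat ->
  lsum (Zrange K) (fun k => good_density k * w k) =
  / INR N * lsum (seq 0 N) (fun x => if carry_free t j x then w (dd t x) else 0).
Proof.
  intros HK.
  rewrite (lsum_ext _ _ (fun k => / INR N * (INR (good_count t j k) * w k)))
    by (intros; unfold good_density, Rdiv, N; ring).
  rewrite lsum_scal. unfold good_count. rewrite lsum_count_values by apply NoDup_Zrange.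
  f_equal. apply lsum_ext. intros x Hx. apply in_seq in Hx.
  destruct (carry_free t j x); [|reflexivity].
  destruct (in_dec Z.eq_dec (dd t x) (Zrange K)) as [|Hout]; [reflexivity|].
  exfalso. apply Hout, In_Zrange. pose proof (dd_between t x). fold N in Hx. unfold K0 in HK. lia.
Qed.

Lemma lsum_Zrange_excess_le K : (K0 <= K)%nat ->
  lsum (Zrange K) (fun k => c_t t k - good_density k) <= INR (bad_count t j) / INR N.
Proof.
  intros HK. pose proof (INR_pow2_pos (S j)) as HN. fold N in HN.
  pose proof (lsum_c_t_le_1 t (Zrange K) (NoDup_Zrange K)).
  pose proof (count_below_add_negb (carry_free t j) N) as Hsplit.
  apply (f_equal INR) in Hsplit. rewrite plus_INR in Hsplit.
  rewrite (lsum_ext _ _ (fun k => c_t t k + -1 * (good_density k * 1))) by (intros; ring).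
  rewrite lsum_plus, lsum_scal, lsum_Zrange_good_density, lsum_indicator by exact HK.
  unfold bad_count. fold N.
  set (G := INR (count_below (carry_free t j) N)) in *.
  set (B := INR (count_below (fun x => negb (carry_free t j x)) N)) in *.
  replace G with (INR N - B) by lra.
  replace (-1 * (/ INR N * (INR N - B))) with (-1 + B / INR N) by (field; lra).
  lra.
Qed.

Lemma Rabs_Series_good_density_le (e : nat -> Z) (phi : R -> R) (th : R) :
  (forall y, Rabs (phi y) <= 1) ->
  (forall K, (K0 <= K)%nat ->
     lsum (seq 0 (S K)) (fun m => c_t t (e m) - good_density (e m))
       <= INR (bad_count t j) / INR N) ->
  (forall m, (K0 < m)%nat -> good_count t j (e m) = 0%nat) ->
  Rabs (Series (fun m => c_t t (e m) * phi (IZR (e m) * th)) -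
        lsum (seq 0 (S K0)) (fun m => good_density (e m) * phi (IZR (e m) * th)))
  <= INR (bad_count t j) / INR N.
Proof.
  intros Hphi Hexcess Hout.
  rewrite (Series_ext _ (fun m => (good_density (e m) + (c_t t (e m) - good_density (e m))) *
                                    phi (IZR (e m) * th))) by (intros; ring).
  apply Rabs_Series_perturb_le; [| exact Hexcess | | intro; apply Hphi].
  - intro m. pose proof (good_density_le_c_t (e m)). lra.
  - intros m Hm. unfold good_density. rewrite Hout by exact Hm. simpl. unfold Rdiv. ring.
Qed.

Lemma lsum_excess_halves_le K : (K0 <= K)%nat ->
  lsum (seq 0 (S K)) (fun m => c_t t (Z.of_nat m) - good_density (Z.of_nat m))
    <= INR (bad_count t j) / INR N /\
  lsum (seq 0 (S K)) (fun m => c_t t (neg_index m) - good_density (neg_index m))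
    <= INR (bad_count t j) / INR N.
Proof.
  intros HK. pose proof (lsum_Zrange_excess_le K HK) as Hall.
  unfold Zrange in Hall. rewrite lsum_app, !lsum_map in Hall.
  assert (Hnonneg : forall e : nat -> Z,
            0 <= lsum (seq 0 (S K)) (fun m => c_t t (e m) - good_density (e m))).
  { intro e. apply lsum_nonneg. intro m. pose proof (good_density_le_c_t (e m)). lra. }
  pose proof (Hnonneg Z.of_nat). pose proof (Hnonneg neg_index). lra.
Qed.

Lemma lsum_bad_part_le (phi : R -> R) (th : R) : (forall y, Rabs (phi y) <= 1) ->
  Rabs (lsum (seq 0 N) (fun x => phi (IZR (dd t x) * th)) -
        lsum (seq 0 N) (fun x => if carry_free t j x then phi (IZR (dd t x) * th) else 0))
  <= INR (bad_count t j).
Proof.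
  intros Hphi.
  rewrite (lsum_ext _ (fun x => phi (IZR (dd t x) * th))
             (fun x => (if carry_free t j x then phi (IZR (dd t x) * th) else 0) +
                       (if carry_free t j x then 0 else phi (IZR (dd t x) * th))))
    by (intros x _; destruct (carry_free t j x); ring).
  rewrite lsum_plus. unfold Rminus. rewrite Rplus_comm, <- Rplus_assoc, Rplus_opp_l, Rplus_0_l.
  eapply Rle_trans; [apply Rabs_lsum_le|].
  unfold bad_count. rewrite <- lsum_indicator. apply lsum_le. intros x _.
  destruct (carry_free t j x); simpl; [rewrite Rabs_R0; lra|apply Hphi].
Qed.

Lemma Rabs_Series_c_t_approx (phi : R -> R) (th : R) : (forall y, Rabs (phi y) <= 1) ->
  Rabs (Series (fun m => c_t t (Z.of_nat m) * phi (IZR (Z.of_nat m) * th)) +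
        Series (fun m => c_t t (neg_index m) * phi (IZR (neg_index m) * th)) -
        / INR N * lsum (seq 0 N) (fun x => phi (IZR (dd t x) * th)))
  <= 3 * (INR (bad_count t j) / INR N).
Proof.
  intros Hphi. pose proof (INR_pow2_pos (S j)) as HN. fold N in HN.
  pose proof (Rabs_Series_good_density_le Z.of_nat phi th Hphi
                (fun K HK => proj1 (lsum_excess_halves_le K HK))
                (fun m Hm => good_count_out_of_range (Z.of_nat m) ltac:(right; lia))) as E1.
  pose proof (Rabs_Series_good_density_le neg_index phi th Hphi
                (fun K HK => proj2 (lsum_excess_halves_le K HK))
                (fun m Hm => good_count_out_of_range (neg_index m)
                               ltac:(unfold neg_index; left; lia))) as E2.
  pose proof (lsum_Zrange_good_density K0 (fun k => phi (IZR k * th)) (le_n _)) as Hgood.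
  unfold Zrange in Hgood. rewrite lsum_app, !lsum_map in Hgood.
  pose proof (lsum_bad_part_le phi th Hphi) as Hbad.
  apply Rabs_le_between in E1, E2, Hbad. apply Rabs_le.
  set (G := lsum (seq 0 N) (fun x => if carry_free t j x then phi (IZR (dd t x) * th) else 0)) in *.
  set (T := lsum (seq 0 N) (fun x => phi (IZR (dd t x) * th))) in *.
  assert (Hscale : - (INR (bad_count t j) / INR N) <= / INR N * (G - T)
                   <= INR (bad_count t j) / INR N).
  { unfold Rdiv. rewrite !(Rmult_comm _ (/ INR N)).
    pose proof (Rinv_0_lt_compat _ HN). split; nra. }
  lra.
Qed.

End GoodApproximation.

Lemma gamma_t_components t th : gamma_t t th =
  (Series (fun m => c_t t (Z.of_nat m) * cos (IZR (Z.of_nat m) * th)) +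
   Series (fun m => c_t t (neg_index m) * cos (IZR (neg_index m) * th)),
   Series (fun m => c_t t (Z.of_nat m) * sin (IZR (Z.of_nat m) * th)) +
   Series (fun m => c_t t (neg_index m) * sin (IZR (neg_index m) * th))).
Proof.
  unfold gamma_t, sumZ, CSeries, Cplus. simpl.
  f_equal; f_equal; apply Series_ext; intro m; unfold Cmult, RtoC, cexpi, neg_index; simpl; ring.
Qed.

Lemma csum_components f N :
  csum f N = (lsum (seq 0 N) (fun n => fst (f n)), lsum (seq 0 N) (fun n => snd (f n))).
Proof.
  induction N; [reflexivity|]. cbn [csum]. rewrite IHN, !lsum_seq_S. reflexivity.
Qed.

Lemma twisted_sum_components th j t : twisted_sum th j t false false =
  (lsum (seq 0 (2 ^ j)) (fun x => cos (IZR (dd t x) * th)),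
   lsum (seq 0 (2 ^ j)) (fun x => sin (IZR (dd t x) * th))).
Proof.
  unfold twisted_sum. rewrite csum_components.
  f_equal; apply lsum_ext; intros n _; rewrite twisted_d_false; reflexivity.
Qed.

Lemma Cmod_le_Rabs_add a b : Cmod (a, b) <= Rabs a + Rabs b.
Proof.
  unfold Cmod. simpl fst; simpl snd.
  pose proof (Rabs_pos a). pose proof (Rabs_pos b).
  rewrite <- (sqrt_pow2 (Rabs a + Rabs b)) by lra.
  apply sqrt_le_1_alt. rewrite <- (pow2_abs a), <- (pow2_abs b). nra.
Qed.

Lemma Cmod_le_Cmod_add a b c d : Cmod (a, b) <= Cmod (c, d) + Rabs (a - c) + Rabs (b - d).
Proof.
  replace (a, b) with (Cplus (c, d) (a - c, b - d)) by (unfold Cplus; simpl; f_equal; ring).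
  eapply Rle_trans; [apply Cmod_triangle|]. pose proof (Cmod_le_Rabs_add (a - c) (b - d)). lra.
Qed.

Lemma Cmod_scal_l (r a b : R) : Cmod (r * a, r * b) = Rabs r * Cmod (a, b).
Proof. rewrite <- Cmod_R, <- Cmod_mult. f_equal. unfold Cmult, RtoC. simpl. f_equal; ring. Qed.

Lemma Rabs_cos_le x : Rabs (cos x) <= 1.
Proof. apply Rabs_le, COS_bound. Qed.

Lemma Rabs_sin_le x : Rabs (sin x) <= 1.
Proof. apply Rabs_le, SIN_bound. Qed.

Lemma Cmod_gamma_t_le t j th :
  Cmod (gamma_t t th) <= Cmod (twisted_sum th (S j) t false false) / INR (2 ^ S j) +
                         6 * (INR (bad_count t j) / INR (2 ^ S j)).
Proof.
  pose proof (INR_pow2_pos (S j)) as HN.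
  pose proof (Rabs_Series_c_t_approx t j cos th Rabs_cos_le) as Hcos.
  pose proof (Rabs_Series_c_t_approx t j sin th Rabs_sin_le) as Hsin.
  unfold Rdiv in *. set (c := / INR (2 ^ S j)) in *.
  rewrite gamma_t_components, twisted_sum_components.
  eapply Rle_trans;
    [apply (Cmod_le_Cmod_add _ _ (c * lsum (seq 0 (2 ^ S j)) (fun x => cos (IZR (dd t x) * th)))
                                 (c * lsum (seq 0 (2 ^ S j)) (fun x => sin (IZR (dd t x) * th))))|].
  rewrite Cmod_scal_l, Rabs_pos_eq by (apply Rlt_le, Rinv_0_lt_compat, HN).
  rewrite (Rmult_comm (Cmod _) c). lra.
Qed.

Lemma Cmod_gamma_t_le_pow2 t j th : Rabs th <= PI -> (t <= j)%nat ->
  Cmod (gamma_t t th) <= (1 - th ^ 2 / 128) ^ (blocks01 t / 2) + 6 * INR t / 2 ^ j.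
Proof.
  intros Hth Hj.
  assert (Ht : (2 * t < 2 ^ S j)%nat).
  { rewrite Nat.pow_succ_r'. pose proof (Nat.pow_gt_lin_r 2 t ltac:(lia)).
    pose proof (Nat.pow_le_mono_r 2 t j ltac:(lia) Hj). lia. }
  pose proof (Cmod_gamma_t_le t j th) as Hgamma.
  pose proof (Cmod_twisted_sum_blocks01_le th t (S j) Hth Ht) as Hsum.
  pose proof (INR_bad_count_le t j) as Hbad.
  rewrite INR_pow2 in Hgamma. pose proof (pow_lt 2 (S j) ltac:(lra)).
  assert (Hmain : Cmod (twisted_sum th (S j) t false false) / 2 ^ S j
                  <= (1 - th ^ 2 / 128) ^ (blocks01 t / 2)).
  { apply Rmult_le_reg_r with (2 ^ S j); [lra|].
    unfold Rdiv. rewrite Rmult_assoc, Rinv_l, Rmult_1_r by lra. lra. }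
  assert (Herr : INR (bad_count t j) / 2 ^ S j <= INR t / 2 ^ j).
  { replace (INR t / 2 ^ j) with (2 * INR t / 2 ^ S j) by (simpl; field; apply pow_nonzero; lra).
    apply Rmult_le_compat_r; [apply Rlt_le, Rinv_0_lt_compat|]; lra. }
  unfold Rdiv in *. lra.
Qed.

Theorem proposition3p10 (t : nat) (theta : R) :
  Rabs theta <= PI ->
  Cmod (gamma_t t theta) <= (1 - theta ^ 2 / 128) ^ (blocks01 t / 2).
Proof.
  intros Hth. apply (le_of_le_add_div_pow2 _ _ (6 * INR t) t).
  intros j Hj. exact (Cmod_gamma_t_le_pow2 t j theta Hth Hj).
Qed.
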